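(* Let $\mathbb{K}=(G,M,I)$ be a finite formal context. Then the concept lattice of the Birkhoff completion of $\mathbb{K}$ is isomorphic to the Birkhoff completion of the concept lattice of $\mathbb{K}$: $\underline{\mathfrak{B}}(BC(\mathbb{K}))\cong BC(\underline{\mathfrak{B}}(\mathbb{K}))$.
   Context: A formal context $\mathbb{K}=(G,M,I)$ has derivation operators $A'=\{m\in M\mid \forall g\in A:(g,m)\in I\}$ for $A\subseteq G$ and $B'=\{g\in G\mid\forall m\in B:(g,m)\in I\}$ for $B\subseteq M$; formal concepts are pairs $(A,B)$ with $A'=B$, $B'=A$, ordered by inclusion of extents, forming the concept lattice $\underline{\mathfrak{B}}(\mathbb{K})$. The attribute concept of $m$ is $\mu m=(\{m\}',\{m\}'')$. For $m,n\in M$ write $m\ge_{\mathbb{K}} n$ iff $\{m\}'\supseteq\{n\}'$. Let $\mathcal{M}(M)$ be the set of attributes $m\in M$ whose attribute concept $\mu m$ is meet-irreducible in $\underline{\mathfrak{B}}(\mathbb{K})$, and let $\overline{\mathcal{M}(M)}=\{\overline m\mid m\in\mathcal{M}(M)\}$ be a set of new elements (disjoint copies, disjoint from $G$). The Birkhoff completion of $\mathbb{K}$ is the context $BC(\mathbb{K}):=\big(G\cup\overline{\mathcal{M}(M)},\,M,\,I\cup\{(\overline m,n)\in\overline{\mathcal{M}(M)}\times M\mid m\not\ge_{\mathbb{K}} n\}\big)$. For a finite lattice $L$ with set $\mathcal{M}(L)$ of meet-irreducible elements, $BC(L):=(\mathcal{F}(\mathcal{M}(L)),\supseteq)$, the order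 filters of $\mathcal{M}(L)$ ordered by reverse inclusion. *)

From mathcomp Require Import all_boot.
Set Implicit Arguments. Unset Strict Implicit. Unset Printing Implicit Defensive.

Section Poset.
Variables (T : finType) (le : rel T).

Definition is_meet (x y z : T) : bool :=
  [&& le x y, le x z & [forall w, (le w y && le w z) ==> le w x]].

Definition meet_irr (x : T) : bool :=
  [exists y, ~~ le y x] &&
  [forall y, forall z, is_meet x y z ==> ((x == y) || (x == z))].

(* order isomorphism (= lattice isomorphism between lattices) *)
Definition order_iso (U : finType) (leU : rel U) : Prop :=
  exists f : T -> U, bijective f /\ forall x y, le x y = leU (f x) (f y).

(* BC(L): order filters of the set of meet-irreducibles, reverse inclusion *)
Definition is_mirr_filter (F : {set T}) : bool :=
  (F \subset [set x | meet_irr x]) &&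
  [forall x, forall y,
     [&& x \in F, meet_irr y & le x y] ==> (y \in F)].

Definition BC_lattice := {F : {set T} | is_mirr_filter F}.
Definition BC_le : rel BC_lattice := fun F1 F2 => val F2 \subset val F1.
End Poset.

Section FCA.
Variables (G M : finType) (I : G -> M -> bool).

Definition intent (A : {set G}) : {set M} := [set m | [forall g in A, I g m]].
Definition extent (B : {set M}) : {set G} := [set g | [forall m in B, I g m]].

Definition is_concept (p : {set G} * {set M}) : bool :=
  (intent p.1 == p.2) && (extent p.2 == p.1).

Definition concept := {p : {set G} * {set M} | is_concept p}.
Definition concept_le : rel concept := fun c d => (val c).1 \subset (val d).1.

Definition attr_concept_pair (m : M) : {set G} * {set M} :=
  (extent [set m], intent (extent [set m])).

Definition mirr_attr (m : M) : bool :=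
  [exists c : concept, (val c == attr_concept_pair m) && meet_irr concept_le c].

Definition attr_ge (m n : M) : bool := extent [set n] \subset extent [set m].

(* Birkhoff completion: objects G + copies of the meet-irreducible attributes *)
Definition BC_obj := (G + {m : M | mirr_attr m})%type.
Definition BC_inc (o : BC_obj) (n : M) : bool :=
  match o with
  | inl g => I g n
  | inr m => ~~ attr_ge (val m) n
  end.
End FCA.

From mathcomp Require Import all_boot.
Set Implicit Arguments. Unset Strict Implicit. Unset Printing Implicit Defensive.

(* Send a concept C of BC(K) to the set of meet-irreducible concepts of K lying
   above mu n for some n in the intent of C.  In a finite context every
   meet-irreducible concept is an attribute concept mu m, and the new object
   m-bar is incident with n exactly when mu m does not lie above mu n; so m-bar
   lies in the extent of C iff mu m is outside the image of C.  Since the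
   meet-irreducible concepts separate an object from any concept missing it,
   the image also determines the old objects of the extent of C, and every
   filter is attained. *)

Lemma order_iso_surj (T U : finType) (leT : rel T) (leU : rel U) (f : T -> U) :
  antisymmetric leT -> reflexive leU -> (forall x y, leT x y = leU (f x) (f y)) ->
  (forall u, exists x, f x == u) -> order_iso leT leU.
Proof.
move=> antiT reflU f_mono f_surj.
have f_inj : injective f by move=> x y fxy; apply: antiT; rewrite !f_mono fxy reflU.
pose g u := xchoose (f_surj u).
have gK : cancel g f by move=> u; apply/eqP/(xchooseP (f_surj u)).
by exists f; split=> //; exists g => // x; apply: f_inj; rewrite gK.
Qed.

Section Galois.
Variables (G M : finType) (I : G -> M -> bool).
Notation le := (@concept_le G M I).

Lemma extentP (B : {set M}) g :
  reflect (forall m, m \in B -> I g m) (g \in extent I B).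
Proof. by rewrite inE; apply: (iffP forall_inP). Qed.

Lemma intentP (A : {set G}) m :
  reflect (forall g, g \in A -> I g m) (m \in intent I A).
Proof. by rewrite inE; apply: (iffP forall_inP). Qed.

Lemma in_extent1 g m : (g \in extent I [set m]) = I g m.
Proof.
apply/extentP/idP => [Ig | Igm n /set1P -> //]; exact: Ig (set11 m).
Qed.

Lemma extentS (B1 B2 : {set M}) :
  B1 \subset B2 -> extent I B2 \subset extent I B1.
Proof.
move=> /subsetP B12; apply/subsetP => g /extentP Ig.
by apply/extentP => m /B12; apply: Ig.
Qed.

Lemma intentS (A1 A2 : {set G}) :
  A1 \subset A2 -> intent I A2 \subset intent I A1.
Proof.
move=> /subsetP A12; apply/subsetP => m /intentP Im.
by apply/intentP => g /A12; apply: Im.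
Qed.

Lemma extentU (B1 B2 : {set M}) :
  extent I (B1 :|: B2) = extent I B1 :&: extent I B2.
Proof.
apply/setP => g; rewrite in_setI.
apply/extentP/andP => [Ig | [/extentP Ig1 /extentP Ig2]].
  by split; apply/extentP => m Bm; apply: Ig; rewrite inE Bm ?orbT.
by move=> m; rewrite inE => /orP[/Ig1 | /Ig2].
Qed.

Lemma sub_extent_intent (A : {set G}) : A \subset extent I (intent I A).
Proof. by apply/subsetP => g Ag; apply/extentP => m /intentP; apply. Qed.

Lemma sub_intent_extent (B : {set M}) : B \subset intent I (extent I B).
Proof. by apply/subsetP => m Bm; apply/intentP => g /extentP; apply. Qed.

Lemma extent_intentK (B : {set M}) : extent I (intent I (extent I B)) = extent I B.
Proof.
by apply/eqP; rewrite eqEsubset extentS ?sub_intent_extent ?sub_extent_intent.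
Qed.

Lemma intent_extentK (A : {set G}) : intent I (extent I (intent I A)) = intent I A.
Proof.
by apply/eqP; rewrite eqEsubset intentS ?sub_intent_extent ?sub_extent_intent.
Qed.

Lemma concept_intent (c : concept I) : intent I (val c).1 = (val c).2.
Proof. by case: c => [[A B]] /= /andP[/eqP]. Qed.

Lemma concept_extent (c : concept I) : extent I (val c).2 = (val c).1.
Proof. by case: c => [[A B]] /= /andP[_ /eqP]. Qed.

Lemma concept_extent_inj : injective (fun c : concept I => (val c).1).
Proof.
move=> c d /= ecd; apply: val_inj.
by rewrite [val c]surjective_pairing [val d]surjective_pairing -!concept_intent ecd.
Qed.

Lemma concept_le_anti : antisymmetric le.
Proof.
by move=> c d cd; apply: concept_extent_inj; apply/eqP; rewrite /= eqEsubset.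
Qed.

Definition concept_gen_attr (B : {set M}) : concept I :=
  exist _ (extent I B, intent I (extent I B))
    (introT andP (conj (eqxx _) (introT eqP (extent_intentK B)))).

Definition concept_gen_obj (A : {set G}) : concept I :=
  exist _ (extent I (intent I A), intent I A)
    (introT andP (conj (introT eqP (intent_extentK A)) (eqxx _))).

Lemma closure_sub_extent (A : {set G}) (c : concept I) :
  A \subset (val c).1 -> extent I (intent I A) \subset (val c).1.
Proof. by move=> Ac; rewrite -concept_extent -concept_intent extentS ?intentS. Qed.

Lemma concept_is_meet (c d e : concept I) :
  (val c).1 = (val d).1 :&: (val e).1 -> is_meet le c d e.
Proof.
move=> ec; rewrite /is_meet /concept_le ec subsetIl subsetIr.
by apply/forallP => w; apply/implyP => /andP[wd we]; rewrite subsetI wd.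
Qed.

Lemma concept_lt_card (c d : concept I) :
  le c d -> c != d -> #|(val c).1| < #|(val d).1|.
Proof.
move=> cd cNd; apply: proper_card; rewrite properEneq andbC; apply/andP; split=> //.
by apply: contra cNd => /eqP/concept_extent_inj ->.
Qed.

(* A concept maximal among those above d that miss g is meet-irreducible:
   everything strictly above it contains g, hence the closure of {g}. *)
Lemma meet_irr_separate (d : concept I) g : g \notin (val d).1 ->
  exists c : concept I,
    [/\ meet_irr le c, (val d).1 \subset (val c).1 & g \notin (val c).1].
Proof.
move=> gNd.
pose P (c : concept I) := ((val d).1 \subset (val c).1) && (g \notin (val c).1).
have Pd : P d by rewrite /P subxx gNd.
have [c /andP[dc gNc] cmax] := @arg_maxnP _ d P (fun c => #|(val c).1|) Pd.
have g_above (u : concept I) : le c u -> c != u -> g \in (val u).1.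
  move=> cu cNu; apply: contraT => gNu.
  have := cmax u; rewrite /P gNu (subset_trans dc cu) => /(_ isT) /=.
  by rewrite leqNgt concept_lt_card.
pose cg := concept_gen_obj [set g].
have g_cg : g \in (val cg).1 by apply/(subsetP (sub_extent_intent _))/set11.
have cg_le (u : concept I) : g \in (val u).1 -> le cg u.
  by move=> gu; apply: closure_sub_extent; rewrite sub1set.
exists c; split=> //; apply/andP; split.
  by apply/existsP; exists cg; apply: contra gNc => /subsetP; apply.
apply/forallP => y; apply/forallP => z; apply/implyP => /and3P[cy cz /forallP c_glb].
apply: contraT; rewrite negb_or => /andP[cNy cNz].
have cg_y := cg_le y (g_above y cy cNy); have cg_z := cg_le z (g_above z cz cNz).
have /implyP/(_ _)/subsetP := c_glb cg; rewrite cg_y cg_z => /(_ isT _ g_cg).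
by rewrite (negPf gNc).
Qed.

(* A minimal set of attributes generating the extent of c has a single element,
   since removing one element m expresses c as the meet of two larger concepts. *)
Lemma meet_irr_attr_concept (c : concept I) :
  meet_irr le c -> exists m, (val c).1 = extent I [set m].
Proof.
case/andP => /existsP[y yNc] /forallP c_irr.
pose P (S : {set M}) := extent I S == (val c).1.
have Pc : P (val c).2 by rewrite /P concept_extent.
have [S /eqP eS Smin] := @arg_minnP _ (val c).2 P (fun S => #|S|) Pc.
have [m mS] : exists m, m \in S.
  apply/set0Pn; apply: contra yNc => /eqP S0.
  by rewrite /concept_le -eS S0; apply/subsetP => g _; apply/extentP => n; rewrite inE.
have c_meet : is_meet le c (concept_gen_attr (S :\ m)) (concept_gen_attr [set m]).
  by apply: concept_is_meet; rewrite /= -extentU setUC setD1K.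
move/forallP: (c_irr (concept_gen_attr (S :\ m))).
move=> /(_ (concept_gen_attr [set m]))/implyP/(_ c_meet)/orP[/eqP ec | /eqP ec].
  have := Smin (S :\ m); rewrite /P ec eqxx => /(_ isT).
  by rewrite (cardsD1 m S) mS add1n ltnn.
by exists m; rewrite ec.
Qed.

End Galois.

Section BirkhoffCompletion.
Variables (G M : finType) (I : G -> M -> bool).
Notation le := (@concept_le G M I).
Notation BCI := (@BC_inc G M I).

Lemma mirr_attrP m :
  mirr_attr I m -> exists2 c : concept I, meet_irr le c & (val c).1 = extent I [set m].
Proof. by case/existsP => c /andP[/eqP vc c_mirr]; exists c; rewrite ?vc. Qed.

Lemma mirr_attr_of (c : concept I) m :
  meet_irr le c -> (val c).1 = extent I [set m] -> mirr_attr I m.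
Proof.
move=> c_mirr ec; apply/existsP; exists c; rewrite c_mirr andbT.
by rewrite /attr_concept_pair -ec concept_intent -surjective_pairing.
Qed.

(* Membership of an object of BC(K) in the extent of BC(K) generated by an
   extent A of K: m-bar joins exactly when A is not contained in {m}'. *)
Definition in_BC_extent (o : BC_obj I) (A : {set G}) : bool :=
  match o with
  | inl g => g \in A
  | inr m => ~~ (A \subset extent I [set val m])
  end.

Lemma BC_incE o n : BCI o n = in_BC_extent o (extent I [set n]).
Proof. by case: o => [g|m] /=; rewrite ?in_extent1. Qed.

Lemma in_BC_extentS o (A1 A2 : {set G}) :
  A1 \subset A2 -> in_BC_extent o A1 -> in_BC_extent o A2.
Proof.
by case: o => [g|m] /= A12; [apply: (subsetP A12) | apply: contra; apply: subset_trans].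
Qed.

Lemma meet_irr_separate_BC o n : ~~ in_BC_extent o (extent I [set n]) ->
  exists c : concept I, [/\ meet_irr le c, extent I [set n] \subset (val c).1
                          & ~~ in_BC_extent o (val c).1].
Proof.
case: o => [g | [m m_mirr]] /= oNn.
  exact: (@meet_irr_separate _ _ _ (concept_gen_attr I [set n])).
have [c c_mirr ec] := mirr_attrP m_mirr.
by exists c; rewrite ec subxx; split=> //; apply/negPn.
Qed.

Definition filter_of_concept (C : concept BCI) : {set concept I} :=
  [set c | meet_irr le c &&
     [exists n in (val C).2, extent I [set n] \subset (val c).1]].

Lemma filter_of_conceptP C : is_mirr_filter le (filter_of_concept C).
Proof.
apply/andP; split; first by apply/subsetP => c; rewrite !inE => /andP[].
apply/forallP => c; apply/forallP => d; apply/implyP => /and3P[].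
rewrite !inE => /andP[_ /existsP[n /andP[nC nc]]] d_mirr cd.
by rewrite d_mirr; apply/existsP; exists n; rewrite nC (subset_trans nc cd).
Qed.

Definition BC_map (C : concept BCI) : BC_lattice le :=
  exist _ (filter_of_concept C) (filter_of_conceptP C).

Lemma mem_filter_of_concept (C : concept BCI) (c : concept I) o :
  c \in filter_of_concept C -> o \in (val C).1 -> in_BC_extent o (val c).1.
Proof.
rewrite inE => /andP[_ /existsP[n /andP[nC nc]]].
rewrite -(concept_extent C) => /extentP/(_ n nC).
by rewrite BC_incE; apply: in_BC_extentS.
Qed.

Lemma BC_map_mono (C1 C2 : concept BCI) :
  concept_le C1 C2 = BC_le (BC_map C1) (BC_map C2).
Proof.
rewrite /BC_le /=; apply/idP/idP => [C12 | F21].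
  have B21 : (val C2).2 \subset (val C1).2 by rewrite -!concept_intent intentS.
  apply/subsetP => c; rewrite !inE => /andP[-> /existsP[n /andP[nC2 nc]]].
  by apply/existsP; exists n; rewrite (subsetP B21).
rewrite /concept_le -(concept_extent C2); apply/subsetP => o oC1.
apply/extentP => n nC2; rewrite BC_incE; apply: contraT => oNn.
have [c [c_mirr nc oNc]] := meet_irr_separate_BC oNn.
have cC2 : c \in filter_of_concept C2.
  by rewrite inE c_mirr; apply/existsP; exists n; rewrite nC2.
by rewrite (mem_filter_of_concept (subsetP F21 _ cC2) oC1) in oNc.
Qed.

Lemma BC_map_surj (F : BC_lattice le) : exists C, BC_map C == F.
Proof.
have /andP[F_mirr /forallP F_up] := valP F.
pose B := [set n | [exists c in val F, (val c).1 == extent I [set n]]].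
exists (concept_gen_attr BCI B); apply/eqP/val_inj/setP => c /=.
apply/idP/idP => [cC | cF].
  have c_mirr : meet_irr le c by move: (cC); rewrite inE => /andP[].
  have [m ec] := meet_irr_attr_concept c_mirr.
  apply: contraT => cNF.
  pose o : BC_obj I := inr (exist _ m (mirr_attr_of c_mirr ec)).
  have oB : o \in extent BCI B.
    apply/extentP => n; rewrite inE => /existsP[d /andP[dF /eqP ed]] /=.
    rewrite /attr_ge -ed -ec; apply: contra cNF => dc.
    by have /forallP/(_ c)/implyP := F_up d; apply; rewrite dF c_mirr.
  by have := mem_filter_of_concept cC oB; rewrite /= ec subxx.
have c_mirr : meet_irr le c by move/subsetP: F_mirr => /(_ c cF); rewrite inE.
have [m ec] := meet_irr_attr_concept c_mirr.
rewrite inE c_mirr; apply/existsP; exists m; rewrite ec subxx andbT.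
apply: (subsetP (sub_intent_extent _ _)); rewrite inE.
by apply/existsP; exists c; rewrite cF ec eqxx.
Qed.

End BirkhoffCompletion.

Theorem mainTheorem5 (G M : finType) (I : G -> M -> bool) :
  order_iso (@concept_le (BC_obj I) M (@BC_inc G M I))
            (@BC_le (concept I) (@concept_le G M I)).
Proof.
apply: (@order_iso_surj _ _ _ _ (@BC_map G M I)).
- exact: concept_le_anti.
- by move=> F; rewrite /BC_le subxx.
- exact: BC_map_mono.
- exact: BC_map_surj.
Qed.
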